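(* Let $(S,d)$ be a metric space and $\bullet\in\{\mathrm{FM},\mathrm{BL}\}$. If $f\in B^S_\bullet$ satisfies $|f|=\mathbf{1}$, then $f\in\operatorname{ext}(B^S_\bullet)$. In particular, if $\bullet=\mathrm{BL}$, then $f=\pm\mathbf{1}$.
   Context: $\mathrm{BL}(S)$ is the space of bounded real-valued Lipschitz functions on $S$, $|f|_L=\sup_{x\neq y}|f(x)-f(y)|/d(x,y)$, $\|f\|_{\mathrm{BL}}=\|f\|_\infty+|f|_L$, $\|f\|_{\mathrm{FM}}=\max(\|f\|_\infty,|f|_L)$, $B^S_\bullet=\{f\in\mathrm{BL}(S):\|f\|_\bullet\le1\}$, $\operatorname{ext}$ denotes the set of extreme points, and $\mathbf{1}$ is the constant function $1$. *)

From HB Require Import structures.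
From mathcomp Require Import all_boot all_order all_algebra.
From mathcomp Require Import boolp classical_sets reals.
Set Implicit Arguments. Unset Strict Implicit. Unset Printing Implicit Defensive.
Import Order.TTheory GRing.Theory Num.Theory.
Local Open Scope ring_scope.
Local Open Scope classical_set_scope.

Definition is_metric (R : realType) (S : Type) (d : S -> S -> R) : Prop :=
  [/\ (forall x y, 0 <= d x y),
      (forall x y, d x y = 0 <-> x = y),
      (forall x y, d x y = d y x) &
      (forall x y z, d x z <= d x y + d y z)].

Definition is_BL (R : realType) (S : Type) (d : S -> S -> R) (f : S -> R) : Prop :=
  (exists M : R, forall x, `|f x| <= M) /\
  (exists L : R, forall x y, `|f x - f y| <= L * d x y).

Definition sup_norm (R : realType) (S : Type) (f : S -> R) : R :=
  sup [set `|f x| | x in [set: S]].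

Definition lip_const (R : realType) (S : Type) (d : S -> S -> R) (f : S -> R) : R :=
  sup [set `|f xy.1 - f xy.2| / d xy.1 xy.2 | xy in [set xy : S * S | xy.1 <> xy.2]].

Inductive normkind := FM | BL.

Definition bnorm (R : realType) (S : Type) (d : S -> S -> R) (k : normkind)
    (f : S -> R) : R :=
  match k with
  | FM => Num.max (sup_norm f) (lip_const d f)
  | BL => sup_norm f + lip_const d f
  end.

Definition unit_ball (R : realType) (S : Type) (d : S -> S -> R) (k : normkind)
    : set (S -> R) :=
  [set f | is_BL d f /\ bnorm d k f <= 1].

Definition is_extreme (R : realType) (S : Type) (C : set (S -> R)) (f : S -> R)
    : Prop :=
  C f /\
  forall g h : S -> R, C g -> C h -> forall t : R, 0 < t < 1 ->
    f = (fun x => t * g x + (1 - t) * h x) -> g = h.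

(* Every function in either unit ball takes values in [-1, 1], and the points
   ±1 are extreme in [-1, 1]; so a convex decomposition of f is trivial at each
   point.  For the BL norm, a function of the ball reaching modulus 1 at some
   point must be constant: otherwise its Lipschitz constant is positive while
   its sup norm is already 1. *)
From HB Require Import structures.
From mathcomp Require Import all_boot all_order all_algebra.
From mathcomp Require Import boolp classical_sets reals.
From mathcomp Require Import lra.
Import Order.TTheory GRing.Theory Num.Theory.
Local Open Scope ring_scope.
Local Open Scope classical_set_scope.
Set Implicit Arguments. Unset Strict Implicit.

Lemma normr_eq1 (R : realDomainType) (a : R) : `|a| = 1 -> a = 1 \/ a = -1.
Proof. by move/eqP; rewrite eqr_norml ler01 andbT => /orP[] /eqP; [left|right]. Qed.

Lemma convex_norm1_eq (R : realFieldType) (a b t : R) :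
  `|a| <= 1 -> `|b| <= 1 -> 0 < t < 1 ->
  `|t * a + (1 - t) * b| = 1 -> a = b.
Proof.
rewrite !ler_norml => /andP[a_ge a_le] /andP[b_ge b_le] /andP[t_gt0 t_lt1].
by move/normr_eq1 => [] E; nra.
Qed.

Section BoundedLipschitz.
Variables (R : realType) (S : Type) (d : S -> S -> R).
Hypothesis hd : is_metric d.

Lemma metric_gt0 x y : x <> y -> 0 < d x y.
Proof.
case: hd => d_ge0 d_eq0 _ _ xy.
by rewrite lt_neqAle d_ge0 andbT; apply/eqP => /esym /d_eq0.
Qed.

Lemma sup_norm_ge (g : S -> R) x : is_BL d g -> `|g x| <= sup_norm g.
Proof.
move=> [[M gM] _]; apply: ub_le_sup; last by exists x.
by exists M => _ [y _ <-].
Qed.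

Lemma lip_const_ge (g : S -> R) x y : is_BL d g -> x <> y ->
  `|g x - g y| / d x y <= lip_const d g.
Proof.
move=> [_ [L gL]] xy; apply: ub_le_sup; last by exists (x, y).
exists L => _ [[a b] /= ab <-] /=.
by rewrite ler_pdivrMr ?metric_gt0.
Qed.

Lemma lip_const_ge0 (g : S -> R) : is_BL d g -> 0 <= lip_const d g.
Proof.
move=> gBL; have [[[x y] /= xy]|/forallNP none] :=
  pselect (exists xy : S * S, xy.1 <> xy.2).
  apply: le_trans (lip_const_ge gBL xy).
  by rewrite divr_ge0 // ltW // metric_gt0.
rewrite /lip_const; suff -> : [set xy : S * S | xy.1 <> xy.2] = set0.
  by rewrite image_set0 sup0.
by apply/seteqP; split => // xy /= /none.
Qed.

Lemma lip_const_gt0 (g : S -> R) x y : is_BL d g -> g x <> g y ->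
  0 < lip_const d g.
Proof.
move=> gBL gxy; have xy : x <> y by move=> e; apply: gxy; rewrite e.
apply: lt_le_trans (lip_const_ge gBL xy).
by rewrite divr_gt0 ?metric_gt0 // normr_gt0 subr_eq0; apply/eqP.
Qed.

Lemma unit_ball_norm_le1 k (g : S -> R) x : unit_ball d k g -> `|g x| <= 1.
Proof.
move=> [gBL g_le1]; apply: le_trans (sup_norm_ge x gBL) _.
have := lip_const_ge0 gBL; case: k g_le1 => /= g_le1 lip_ge0.
  by apply: le_trans g_le1; rewrite le_max lexx.
lra.
Qed.

Lemma unit_ball_BL_norm1_const (g : S -> R) x :
  unit_ball d BL g -> `|g x| = 1 -> forall y, g y = g x.
Proof.
move=> [gBL /= g_le1] gx1 y; apply: contrapT => gxy.
have := sup_norm_ge x gBL; have := lip_const_gt0 gBL gxy; rewrite gx1; lra.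
Qed.

End BoundedLipschitz.

Theorem lemma3p1 (R : realType) (S : Type) (d : S -> S -> R)
    (hd : is_metric d) (k : normkind) (f : S -> R) :
  unit_ball d k f -> (forall x, `|f x| = 1) ->
  is_extreme (unit_ball d k) f /\
  (k = BL -> f = (fun _ => 1) \/ f = (fun _ => -1)).
Proof.
move=> f_ball f1; split.
  split=> // g h g_ball h_ball t t01 f_conv; apply/funext => x.
  have := f1 x; rewrite f_conv => /(convex_norm1_eq _ _ t01); apply.
    exact: unit_ball_norm_le1 g_ball.
  exact: unit_ball_norm_le1 h_ball.
move=> kBL; subst k.
have [f_ne1|/forallNP f_eq1] := pselect (exists x, f x <> 1); last first.
  by left; apply/funext => x; exact: contrapT (f_eq1 x).
right; case: f_ne1 => x fx_ne1; apply/funext => y.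
rewrite (unit_ball_BL_norm1_const hd f_ball (f1 x)).
by have [/fx_ne1|] := normr_eq1 (f1 x).
Qed.
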